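(* Let $(f_\alpha)_{\alpha\in\mathbb N_0^3\setminus\{(0,0,0)\}}$ be quaternions such that $\sum_{\alpha\neq 0} r_0^{|\alpha|}|f_\alpha|<\infty$ for some $r_0>0$, and let $f(x)=\sum_{\alpha\neq 0}\zeta(x)^\alpha f_\alpha$. Then for every $\rho>0$ there exists $\epsilon>0$ such that for every $x=x_0+x_1\mathbf e_1+x_2\mathbf e_2+x_3\mathbf e_3$ with $x_0^2+x_j^2<\epsilon$ for $j=1,2,3$ and every $n\in\mathbb N$, one has $|f^{\odot n}(x)|<\rho^n$.
   Context: $\mathbb H$ is the algebra of quaternions, $x=x_0+x_1\mathbf e_1+x_2\mathbf e_2+x_3\mathbf e_3$ identified with a point of $\mathbb R^4$, $|x|^2=x_0^2+x_1^2+x_2^2+x_3^2$. A function is (left) hyperholomorphic if it is annihilated by the Cauchy–Fueter operator $D=\partial_{x_0}+\mathbf e_1\partial_{x_1}+\mathbf e_2\partial_{x_2}+\mathbf e_3\partial_{x_3}$. The Fueter variables are $\zeta_j(x)=x_j-\mathbf e_jx_0$, $j=1,2,3$. For $\nu=(\nu_1,\nu_2,\nu_3)\in\mathbb N_0^3$ with $|\nu|=\nu_1+\nu_2+\nu_3=n$, $\zeta^\nu$ is the symmetrized product: listing the $n$ factors consisting of $\nu_1$ copies of $\zeta_1$, $\nu_2$ copies of $\zeta_2$, $\nu_3$ copies of $\zeta_3$ as $a_1,\dots,a_n$, $\zeta^\nu=\frac1{n!}\sum_{\sigma\in S_n}a_{\sigma(1)}\cdots a_{\sigma(n)}$ ($\zeta^0=1$).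 The Cauchy–Kovalevskaya (CK) extension $CK(\varphi)$ of a real analytic $\mathbb H$-valued function $\varphi(x_1,x_2,x_3)$ is the unique left hyperholomorphic function whose restriction to $x_0=0$ is $\varphi$. The CK-product of left hyperholomorphic functions is $f\odot g=CK\big(f(0,x_1,x_2,x_3)g(0,x_1,x_2,x_3)\big)$ (pointwise product of the restrictions), and $f^{\odot n}$ is the $n$-fold CK-product; on Fueter series it satisfies $\zeta^\nu p\odot\zeta^\mu q=\zeta^{\nu+\mu}pq$ for $p,q\in\mathbb H$. *)

From HB Require Import structures.
From mathcomp Require Import all_boot all_order all_algebra all_fingroup.
From mathcomp Require Import reals.
Set Implicit Arguments. Unset Strict Implicit. Unset Printing Implicit Defensive.
Import Order.TTheory GRing.Theory Num.Theory.
Local Open Scope ring_scope.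

Section Quaternions.
Variable R : realType.

(* A quaternion q = q0 + q1 e1 + q2 e2 + q3 e3, stored as a row vector of R^4. *)
Definition quat := 'rV[R]_4.

Definition qc (q : quat) (i : nat) : R := q ord0 (inord i).

Definition mkQ (a b c d : R) : quat := \row_(i < 4) nth 0 [:: a; b; c; d] i.

Definition qone : quat := mkQ 1 0 0 0.

(* Hamilton product, e1 e2 = e3, e2 e3 = e1, e3 e1 = e2, ej^2 = -1 *)
Definition qmul (p q : quat) : quat :=
  mkQ (qc p 0 * qc q 0 - qc p 1 * qc q 1 - qc p 2 * qc q 2 - qc p 3 * qc q 3)
      (qc p 0 * qc q 1 + qc p 1 * qc q 0 + qc p 2 * qc q 3 - qc p 3 * qc q 2)
      (qc p 0 * qc q 2 - qc p 1 * qc q 3 + qc p 2 * qc q 0 + qc p 3 * qc q 1)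
      (qc p 0 * qc q 3 + qc p 1 * qc q 2 - qc p 2 * qc q 1 + qc p 3 * qc q 0).

Definition qnorm (q : quat) : R := Num.sqrt (\sum_(i < 4) q ord0 i ^+ 2).

(* Fueter variables zeta_j(x) = x_j - e_j x_0, j = 1,2,3 *)
Definition zeta1 (x : quat) : quat := mkQ (qc x 1) (- qc x 0) 0 0.
Definition zeta2 (x : quat) : quat := mkQ (qc x 2) 0 (- qc x 0) 0.
Definition zeta3 (x : quat) : quat := mkQ (qc x 3) 0 0 (- qc x 0).

Definition mi := (nat * nat * nat)%type.
Definition mi0 : mi := (0%N, 0%N, 0%N).

(* symmetrized product zeta^nu = 1/n! sum_{sigma in S_n} a_{sigma 1} ... a_{sigma n} *)
Definition zeta_pow (x : quat) (nu : mi) : quat :=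
  let: (a, b, c) := nu in
  let s := nseq a (zeta1 x) ++ nseq b (zeta2 x) ++ nseq c (zeta3 x) in
  ((a + b + c)`!%:R)^-1 *:
    \sum_(sigma : 'S_(a + b + c)) \big[qmul/qone]_(i < a + b + c) s`_(sigma i).

(* sum over all multi-indices of total degree k (each exactly once) *)
Definition sum_deg (V : zmodType) (k : nat) (F : mi -> V) : V :=
  \sum_(a < k.+1) \sum_(b < (k - a).+1) F (nat_of_ord a, nat_of_ord b, (k - a - b)%N).

(* coefficient family of a Fueter series indexed by alpha <> 0 *)
Definition coef_trunc (f : mi -> quat) (al : mi) : quat :=
  if al == mi0 then 0 else f al.

(* CK-product of Fueter series on coefficients:
   (sum zeta^g p_g) (.) (sum zeta^a q_a) = sum_b zeta^b (sum_{g+a=b} p_g q_a) *)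
Definition ck_conv (p q : mi -> quat) (be : mi) : quat :=
  let: (b1, b2, b3) := be in
  \sum_(i < b1.+1) \sum_(j < b2.+1) \sum_(k < b3.+1)
     qmul (p (nat_of_ord i, nat_of_ord j, nat_of_ord k)) (q ((b1 - i)%N, (b2 - j)%N, (b3 - k)%N)).

(* coefficients of f^{(.)n}, where f = sum_{alpha<>0} zeta^alpha f_alpha;
   f^{(.)0} = 1 and f^{(.)(n+1)} = f^{(.)n} (.) f *)
Fixpoint ck_pow_coef (f : mi -> quat) (n : nat) : mi -> quat :=
  match n with
  | 0%N => fun al => if al == mi0 then qone else 0
  | n'.+1 => ck_conv (ck_pow_coef f n') (coef_trunc f)
  end.

Definition fueter_partial (x : quat) (c : mi -> quat) (K : nat) : quat :=
  \sum_(k < K) sum_deg k (fun be => qmul (zeta_pow x be) (c be)).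

Definition ck_pow_at (f : mi -> quat) (n : nat) (x v : quat) : Prop :=
  forall e : R, 0 < e -> exists N : nat, forall K : nat, (N <= K)%N ->
    qnorm (fueter_partial x (ck_pow_coef f n) K - v) < e.

End Quaternions.

From HB Require Import structures.
From mathcomp Require Import all_boot all_order all_algebra all_fingroup.
From mathcomp Require Import reals.
From mathcomp Require Import classical_sets ring lra zify.
Import Order.TTheory GRing.Theory Num.Theory.
Local Open Scope ring_scope.

(* Proof idea (a Cauchy-type majorant argument on coefficients).
   Write c_n for the coefficients of f^{(.)n} and, for s >= 0,
   ||c||_s = sum_beta s^|beta| |c_beta| for the weighted l^1 norm.
   1. The quaternion norm is multiplicative and subadditive; since each Fueter
      variable satisfies |zeta_j(x)|^2 = x_0^2 + x_j^2, a bound |zeta_j(x)| <= s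
      gives |zeta(x)^beta| <= s^|beta| for the symmetrized products.
   2. The CK-product acts on coefficients as a Cauchy convolution, so the
      weighted norm is submultiplicative: ||c_n||_s <= ||f||_s^n.  Technically
      the norms are taken over finite boxes [0,K)^3 and compared with the
      truncated sums over total degree < K used in the statement.
   3. For s = q r0 with 0 < q <= 1 the coefficients of f (which have no
      constant term) satisfy ||f||_s <= q M, where M bounds the r0-sums.
   4. A quaternion series dominated by a bounded nonnegative series converges,
      and its sum has norm at most the bound.
   Choosing q with q M < rho and eps = s^2 then gives |f^{(.)n}(x)| <= (qM)^n
   < rho^n. *)

Set Implicit Arguments. Unset Strict Implicit. Unset Printing Implicit Defensive.

Section QuaternionNorm.
Variable R : realType.
Implicit Types p q : quat R.

Lemma qcE p (i : 'I_4) : p ord0 i = qc p i.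
Proof. by rewrite /qc; congr (p _ _); apply/val_inj; rewrite /= inordK. Qed.

Lemma qnormE p :
  qnorm p = Num.sqrt (qc p 0 ^+ 2 + qc p 1 ^+ 2 + qc p 2 ^+ 2 + qc p 3 ^+ 2).
Proof. by rewrite /qnorm !big_ord_recr big_ord0 /= add0r !qcE. Qed.

Lemma mkQ0 (a b c d : R) : qc (mkQ a b c d) 0 = a.
Proof. by rewrite /qc /mkQ mxE inordK. Qed.
Lemma mkQ1 (a b c d : R) : qc (mkQ a b c d) 1 = b.
Proof. by rewrite /qc /mkQ mxE inordK. Qed.
Lemma mkQ2 (a b c d : R) : qc (mkQ a b c d) 2 = c.
Proof. by rewrite /qc /mkQ mxE inordK. Qed.
Lemma mkQ3 (a b c d : R) : qc (mkQ a b c d) 3 = d.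
Proof. by rewrite /qc /mkQ mxE inordK. Qed.

Lemma qcD p q i : qc (p + q) i = qc p i + qc q i.
Proof. by rewrite /qc mxE. Qed.
Lemma qcB p q i : qc (p - q) i = qc p i - qc q i.
Proof. by rewrite /qc !mxE. Qed.
Lemma qcZ (c : R) p i : qc (c *: p) i = c * qc p i.
Proof. by rewrite /qc mxE. Qed.
Lemma qc0 i : qc (0 : quat R) i = 0.
Proof. by rewrite /qc mxE. Qed.
Lemma qc_sum (I : Type) (r : seq I) (P : pred I) (F : I -> quat R) i :
  qc (\sum_(j <- r | P j) F j) i = \sum_(j <- r | P j) qc (F j) i.
Proof. by rewrite /qc summxE. Qed.

Lemma sqrt_le_sq (X Y : R) : 0 <= Y -> X <= Y ^+ 2 -> Num.sqrt X <= Y.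
Proof.
move=> hY hX; case: (lerP X 0) => hX0.
  by have /eqP -> : Num.sqrt X == 0 by rewrite sqrtr_eq0.
by rewrite -(ger0_norm hY) -sqrtr_sqr ler_sqrt // exprn_ge0.
Qed.

Lemma qnorm_ge0 p : 0 <= qnorm p.
Proof. exact: sqrtr_ge0. Qed.

Lemma qnorm0 : qnorm (0 : quat R) = 0.
Proof. by rewrite qnormE !qc0 expr0n /= !addr0 sqrtr0. Qed.

Lemma qnorm_qone : qnorm (qone R) = 1.
Proof. by rewrite qnormE /qone mkQ0 mkQ1 mkQ2 mkQ3 expr1n expr0n /= !addr0 sqrtr1. Qed.

(* The quaternion norm is multiplicative (Euler's four-square identity). *)
Lemma qnorm_mul p q : qnorm (qmul p q) = qnorm p * qnorm q.
Proof.
rewrite !qnormE /qmul mkQ0 mkQ1 mkQ2 mkQ3 -sqrtrM; last first.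
  by rewrite !addr_ge0 // sqr_ge0.
congr Num.sqrt; ring.
Qed.

(* Cauchy-Schwarz in R^4, via Lagrange's identity. *)
Lemma cauchy_schwarz4 (a0 a1 a2 a3 b0 b1 b2 b3 : R) :
  (a0 * b0 + a1 * b1 + a2 * b2 + a3 * b3) ^+ 2 <=
  (a0^+2 + a1^+2 + a2^+2 + a3^+2) * (b0^+2 + b1^+2 + b2^+2 + b3^+2).
Proof.
rewrite -subr_ge0.
have -> : (a0^+2 + a1^+2 + a2^+2 + a3^+2) * (b0^+2 + b1^+2 + b2^+2 + b3^+2)
    - (a0 * b0 + a1 * b1 + a2 * b2 + a3 * b3) ^+ 2 =
  (a0*b1 - a1*b0)^+2 + (a0*b2 - a2*b0)^+2 + (a0*b3 - a3*b0)^+2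
  + (a1*b2 - a2*b1)^+2 + (a1*b3 - a3*b1)^+2 + (a2*b3 - a3*b2)^+2 by ring.
by rewrite !addr_ge0 // sqr_ge0.
Qed.

Lemma qnorm_add p q : qnorm (p + q) <= qnorm p + qnorm q.
Proof.
rewrite [qnorm (p + q)]qnormE !qcD.
set a0 := qc p 0; set a1 := qc p 1; set a2 := qc p 2; set a3 := qc p 3.
set b0 := qc q 0; set b1 := qc q 1; set b2 := qc q 2; set b3 := qc q 3.
set A := a0^+2 + a1^+2 + a2^+2 + a3^+2; set B := b0^+2 + b1^+2 + b2^+2 + b3^+2.
set S := a0 * b0 + a1 * b1 + a2 * b2 + a3 * b3.
have hA : 0 <= A by rewrite !addr_ge0 // sqr_ge0.
have hB : 0 <= B by rewrite !addr_ge0 // sqr_ge0.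
have hS : S <= Num.sqrt A * Num.sqrt B.
  rewrite -sqrtrM //; apply: (le_trans (ler_norm S)).
  by rewrite -sqrtr_sqr ler_sqrt ?mulr_ge0 // cauchy_schwarz4.
apply: sqrt_le_sq; first by rewrite addr_ge0 // qnorm_ge0.
rewrite !qnormE -/a0 -/a1 -/a2 -/a3 -/b0 -/b1 -/b2 -/b3 -/A -/B [X in _ <= X]sqrrD !sqr_sqrtr //.
have -> : (a0 + b0) ^+ 2 + (a1 + b1) ^+ 2 + (a2 + b2) ^+ 2 + (a3 + b3) ^+ 2 =
  A + B + 2 * S by rewrite /A /B /S; ring.
lra.
Qed.

Lemma qnormZ (c : R) p : qnorm (c *: p) = `|c| * qnorm p.
Proof. by rewrite !qnormE !qcZ -sqrtr_sqr -sqrtrM ?sqr_ge0 //; congr Num.sqrt; ring. Qed.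

Lemma qnormN p : qnorm (- p) = qnorm p.
Proof. by rewrite -scaleN1r qnormZ normrN normr1 mul1r. Qed.

Lemma qnorm_sum (I : Type) (r : seq I) (P : pred I) (F : I -> quat R) :
  qnorm (\sum_(j <- r | P j) F j) <= \sum_(j <- r | P j) qnorm (F j).
Proof.
apply: (big_ind2 (fun x y => qnorm x <= y)) => //; first by rewrite qnorm0.
by move=> x1 x2 y1 y2 h1 h2; apply: (le_trans (qnorm_add _ _)); apply: lerD.
Qed.

Lemma qnorm_bigmul (n : nat) (F : 'I_n -> quat R) (t : R) :
  (forall i, qnorm (F i) <= t) -> qnorm (\big[@qmul R/qone R]_(i < n) F i) <= t ^+ n.
Proof.
move=> hF; rewrite -[n in t ^+ n]card_ord -prodr_const.
apply: (big_ind2 (fun x y => qnorm x <= y)) => //; first by rewrite qnorm_qone.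
by move=> x1 x2 y1 y2 h1 h2; rewrite qnorm_mul; apply: ler_pM => //; exact: qnorm_ge0.
Qed.

Lemma qc_le p i : (i < 4)%N -> `|qc p i| <= qnorm p.
Proof.
move=> hi; rewrite qnormE -sqrtr_sqr ler_sqrt ?addr_ge0 ?sqr_ge0 //.
have h0 := sqr_ge0 (qc p 0); have h1 := sqr_ge0 (qc p 1).
have h2 := sqr_ge0 (qc p 2); have h3 := sqr_ge0 (qc p 3).
by case: i hi => [|[|[|[|]]]] //= _; lra.
Qed.

Lemma qnorm_le_comp p : qnorm p <= `|qc p 0| + `|qc p 1| + `|qc p 2| + `|qc p 3|.
Proof.
rewrite qnormE; apply: sqrt_le_sq; first by rewrite !addr_ge0.
rewrite -!(real_normK (num_real (qc p _))).
have h0 := normr_ge0 (qc p 0); have h1 := normr_ge0 (qc p 1).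
have h2 := normr_ge0 (qc p 2); have h3 := normr_ge0 (qc p 3).
nra.
Qed.

(* |zeta_j(x)|^2 = x_0^2 + x_j^2, so the hypothesis of the theorem makes the
   three Fueter variables small. *)
Lemma qnorm_zeta_le (x : quat R) (s : R) : 0 <= s ->
  qc x 0 ^+ 2 + qc x 1 ^+ 2 < s ^+ 2 ->
  qc x 0 ^+ 2 + qc x 2 ^+ 2 < s ^+ 2 ->
  qc x 0 ^+ 2 + qc x 3 ^+ 2 < s ^+ 2 ->
  [/\ qnorm (zeta1 x) <= s, qnorm (zeta2 x) <= s & qnorm (zeta3 x) <= s].
Proof.
move=> hs h1 h2 h3.
by split; rewrite qnormE /zeta1 /zeta2 /zeta3 mkQ0 mkQ1 mkQ2 mkQ3;
  apply: sqrt_le_sq => //; rewrite sqrrN expr0n /= !addr0 addrC ltW.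
Qed.

(* |zeta(x)^beta| <= s^|beta| when every Fueter variable has norm <= s:
   zeta^beta is an average of products of |beta| such variables. *)
Lemma zeta_pow_le (x : quat R) (s : R) a b c : 0 <= s ->
  qnorm (zeta1 x) <= s -> qnorm (zeta2 x) <= s -> qnorm (zeta3 x) <= s ->
  qnorm (zeta_pow x (a, b, c)) <= s ^+ (a + b + c).
Proof.
move=> hs h1 h2 h3; rewrite /zeta_pow qnormZ.
set n := (a + b + c)%N.
set sq := nseq a (zeta1 x) ++ nseq b (zeta2 x) ++ nseq c (zeta3 x).
have hn : (0 : R) < n`!%:R by rewrite ltr0n fact_gt0.
have hsq : forall i, qnorm sq`_i <= s.
  move=> i; case: (ltnP i (size sq)) => hi; last by rewrite nth_default ?qnorm0.
  by move: (mem_nth 0 hi); rewrite !mem_cat => /or3P [] /nseqP [-> _].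
rewrite ger0_norm; last by rewrite invr_ge0 ltW.
rewrite ler_pdivrMl //.
apply: le_trans (qnorm_sum _ _ _) _.
apply: le_trans (_ : \sum_(sigma : 'S_n) s ^+ n <= _).
  by apply: ler_sum => sigma _; apply: qnorm_bigmul.
by rewrite sumr_const card_Sn mulr_natl.
Qed.

End QuaternionNorm.

Section SeriesConvergence.
Variable R : realType.
Local Open Scope classical_set_scope.

Lemma mono_cvg (P : nat -> R) (C : R) :
  (forall k, P k <= P k.+1) -> (forall k, P k <= C) ->
  exists L, forall e, 0 < e -> exists N, forall K, (N <= K)%N -> `|P K - L| < e.
Proof.
move=> hP hC.
have mon : forall m n, (m <= n)%N -> P m <= P n.
  move=> m n /subnK <-; elim: (n - m)%N => [|d ih] //=.
  by rewrite addSn; apply: le_trans ih (hP _).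
pose E := [set y : R | exists k, y = P k].
have hE : has_sup E by split; [exists (P 0%N), 0%N | exists C => y [k ->]].
exists (sup E) => e he.
have [y [N ->] hy] := sup_adherent he hE.
exists N => K hK.
have h1 : P K <= sup E by apply: sup_upper_bound => //; exists K.
have h2 := mon _ _ hK.
rewrite ler0_norm ?subr_le0 //; lra.
Qed.

(* Absolutely convergent real series converge: both sum (w + d) and sum w are
   nondecreasing and bounded. *)
Lemma abs_series_cvg (d w : nat -> R) (C : R) : (forall k, `|d k| <= w k) ->
  (forall K, \sum_(k < K) w k <= C) ->
  exists L, forall e, 0 < e -> exists N, forall K, (N <= K)%N ->
    `|\sum_(k < K) d k - L| < e.
Proof.
move=> hd hw.
have [L1 h1] : exists L, forall e, 0 < e -> exists N, forall K, (N <= K)%N ->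
    `|\sum_(k < K) (w k + d k) - L| < e.
  apply: (@mono_cvg _ (C + C)).
    move=> k; rewrite big_ord_recr /= lerDl.
    by have := hd k; rewrite ler_norml; lra.
  move=> k; rewrite big_split /=; apply: lerD; first exact: hw.
  apply: le_trans _ (hw k); apply: ler_sum => i _; apply: le_trans (ler_norm _) (hd i).
have [L2 h2] : exists L, forall e, 0 < e -> exists N, forall K, (N <= K)%N ->
    `|\sum_(k < K) w k - L| < e.
  apply: (@mono_cvg _ C) => // k.
  by rewrite big_ord_recr /= lerDl; apply: le_trans (hd k).
exists (L1 - L2) => e he.
have he2 : 0 < e / 2 by rewrite divr_gt0.
have [N1 hN1] := h1 _ he2; have [N2 hN2] := h2 _ he2.
exists (maxn N1 N2) => K hK.
have a1 := hN1 K (leq_trans (leq_maxl _ _) hK).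
have a2 := hN2 K (leq_trans (leq_maxr _ _) hK).
rewrite big_split /= in a1.
have -> : \sum_(k < K) d k - (L1 - L2) =
   (\sum_(k < K) w k + \sum_(k < K) d k - L1) - (\sum_(k < K) w k - L2) by ring.
apply: le_lt_trans (ler_normB _ _) _; lra.
Qed.

Definition qseries_to (d : nat -> quat R) (v : quat R) : Prop :=
  forall e : R, 0 < e -> exists N : nat, forall K : nat, (N <= K)%N ->
    qnorm (\sum_(k < K) d k - v) < e.

Lemma qseries_abs_cvg (d : nat -> quat R) (w : nat -> R) (C : R) :
  (forall k, qnorm (d k) <= w k) -> (forall K, \sum_(k < K) w k <= C) ->
  exists2 v, qseries_to d v & qnorm v <= C.
Proof.
move=> hd hw.
have comp i : (i < 4)%N -> exists L, forall e, 0 < e -> exists N, forall K,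
    (N <= K)%N -> `|\sum_(k < K) qc (d k) i - L| < e.
  move=> hi; apply: (@abs_series_cvg (fun k => qc (d k) i) w C) => // k.
  exact: le_trans (qc_le _ hi) (hd k).
have [L0 hL0] := comp 0%N isT; have [L1 hL1] := comp 1%N isT.
have [L2 hL2] := comp 2%N isT; have [L3 hL3] := comp 3%N isT.
pose v := mkQ L0 L1 L2 L3.
have cvg_v : qseries_to d v.
  move=> e he; have he4 : 0 < e / 4 by rewrite divr_gt0.
  have [N0 hN0] := hL0 _ he4; have [N1 hN1] := hL1 _ he4.
  have [N2 hN2] := hL2 _ he4; have [N3 hN3] := hL3 _ he4.
  exists (maxn (maxn N0 N1) (maxn N2 N3)) => K hK.
  have a0 := hN0 K (leq_trans (leq_trans (leq_maxl N0 N1) (leq_maxl _ _)) hK).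
  have a1 := hN1 K (leq_trans (leq_trans (leq_maxr N0 N1) (leq_maxl _ _)) hK).
  have a2 := hN2 K (leq_trans (leq_trans (leq_maxl N2 N3) (leq_maxr _ _)) hK).
  have a3 := hN3 K (leq_trans (leq_trans (leq_maxr N2 N3) (leq_maxr _ _)) hK).
  apply: le_lt_trans (qnorm_le_comp _) _.
  rewrite !qcB !qc_sum /v mkQ0 mkQ1 mkQ2 mkQ3; lra.
exists v => //; apply/ler_addgt0Pr => e he.
have [N hN] := cvg_v _ he.
set S := \sum_(k < N) d k.
have hS : qnorm S <= C.
  by apply: le_trans (qnorm_sum _ _ _) _; apply: le_trans (hw N); apply: ler_sum.
have hv : qnorm v <= qnorm S + qnorm (S - v).
  rewrite -(qnormN (S - v)); apply: le_trans (qnorm_add _ _).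
  by rewrite opprB addrC subrK.
by have := hN N (leqnn N); lra.
Qed.

End SeriesConvergence.

Section DegreeAndBoxSums.
Variable R : realType.
Implicit Types g u v : mi -> R.

(* Partial sums of a nonnegative family indexed by N_0^3 are taken either over
   total degree < K (as in the statement) or over the box [0,K)^3 (which is
   convenient for products); the two are comparable. *)
Definition deg_sum (K : nat) g : R := \sum_(k < K) sum_deg k g.

Definition box_sum (K : nat) g : R :=
  \sum_(a < K) \sum_(b < K) \sum_(c < K) g (a : nat, b : nat, c : nat).

Lemma sum_if_eq N m (F : nat -> R) : (m < N)%N ->
  \sum_(c < N) (if (c == m :> nat) then F c else 0) = F m.
Proof. by move=> hm; rewrite -big_mkcond (big_pred1 (Ordinal hm)). Qed.

Lemma sum_if_lt N m (F : nat -> R) : (m <= N)%N ->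
  \sum_(i < N) (if (i < m)%N then F i else 0) = \sum_(i < m) F i.
Proof. by move=> hm; rewrite -big_mkcond -big_ord_widen. Qed.

Lemma sum_widen N m (F : nat -> R) : (m <= N)%N -> (forall i, 0 <= F i) ->
  \sum_(i < m) F i <= \sum_(i < N) F i.
Proof.
move=> hm hF; rewrite -(sum_if_lt F hm); apply: ler_sum => i _.
by case: ifP.
Qed.

Lemma sum_deg_box k N g : (k < N)%N ->
  sum_deg k g = \sum_(a < N) \sum_(b < N) \sum_(c < N)
     (if (a + b + c == k)%N then g (a : nat, b : nat, c : nat) else 0).
Proof.
move=> hk; rewrite /sum_deg.
transitivity (\sum_(a < N) (if (a < k.+1)%N then
   \sum_(b < (k - a).+1) g ((a : nat), (b : nat), (k - a - b)%N) else 0)).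
  by rewrite (sum_if_lt (fun a => \sum_(b < (k - a).+1) g (a, (b : nat), (k - a - b)%N))).
apply: eq_bigr => a _; case: ltnP => ha; last first.
  symmetry; rewrite big1 // => b _; rewrite big1 // => c _.
  by have -> : (a + b + c == k)%N = false by apply/eqP; lia.
rewrite -(sum_if_lt (fun b => g ((a : nat), b, (k - a - b)%N)) (_ : ((k - a).+1 <= N)%N));
  last by lia.
apply: eq_bigr => b _; case: ltnP => hb; last first.
  by rewrite big1 // => c _; have -> : (a + b + c == k)%N = false by apply/eqP; lia.
rewrite -(sum_if_eq (fun c => g ((a : nat), (b : nat), c)) (_ : (k - a - b < N)%N)); last by lia.
by apply: eq_bigr => c _; congr (if _ then _ else _); apply/eqP/eqP; lia.
Qed.

Lemma deg_sum_box K N g : (K <= N)%N ->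
  deg_sum K g = \sum_(a < N) \sum_(b < N) \sum_(c < N)
     (if (a + b + c < K)%N then g (a : nat, b : nat, c : nat) else 0).
Proof.
move=> hK; rewrite /deg_sum.
rewrite (eq_bigr (fun k : 'I_K => \sum_(a < N) \sum_(b < N) \sum_(c < N)
     (if (a + b + c == k)%N then g (a : nat, b : nat, c : nat) else 0))); last first.
  by move=> k _; apply: sum_deg_box; apply: leq_trans (ltn_ord k) hK.
rewrite exchange_big; apply: eq_bigr => a _.
rewrite exchange_big; apply: eq_bigr => b _.
rewrite exchange_big; apply: eq_bigr => c _.
case: ltnP => h; last first.
  by rewrite big1 // => k _; have -> : (a + b + c == k)%N = false by apply/eqP; have := ltn_ord k; lia.
rewrite (eq_bigr (fun k : 'I_K => if (k == (a + b + c)%N :> nat)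
  then g ((a : nat), (b : nat), (c : nat)) else 0)); last by move=> k _; rewrite eq_sym.
exact: (sum_if_eq (fun _ => g ((a : nat), (b : nat), (c : nat))) h).
Qed.

Lemma deg_sum_le_box K g : (forall al, 0 <= g al) -> deg_sum K g <= box_sum K g.
Proof.
move=> hg; rewrite (deg_sum_box g (leqnn K)).
by do 3 (apply: ler_sum => ? _); case: ifP.
Qed.

Lemma box_le_deg_sum K g : (forall al, 0 <= g al) -> box_sum K g <= deg_sum (3 * K) g.
Proof.
move=> hg; rewrite (deg_sum_box g (leqnn _)) /box_sum.
have h3 : (K <= 3 * K)%N by lia.
set N := (3 * K)%N; rewrite -/N in h3.
apply: (le_trans _ (@sum_widen _ _ (fun a => \sum_(b < N) \sum_(c < N)
   (if (a + b + c < N)%N then g (a, (b : nat), (c : nat)) else 0)) h3 _)); last first.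
  by move=> a; do 2 (apply: sumr_ge0 => ? _); case: ifP.
apply: ler_sum => a _.
apply: (le_trans _ (@sum_widen _ _ (fun b => \sum_(c < N)
   (if (a + b + c < N)%N then g ((a : nat), b, (c : nat)) else 0)) h3 _)); last first.
  by move=> b; apply: sumr_ge0 => c _; case: ifP.
apply: ler_sum => b _.
apply: (le_trans _ (@sum_widen _ _ (fun c =>
   (if (a + b + c < N)%N then g ((a : nat), (b : nat), c) else 0)) h3 _)); last first.
  by move=> c; case: ifP.
apply: ler_sum => c _.
by rewrite ifT //; have := ltn_ord a; have := ltn_ord b; have := ltn_ord c; rewrite /N; lia.
Qed.

Lemma box_sum_ge0 K g : (forall al, 0 <= g al) -> 0 <= box_sum K g.
Proof. by move=> hg; do 3 (apply: sumr_ge0 => ? _); apply: hg. Qed.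

Lemma conv1_le_square K (H : nat -> nat -> R) : (forall i j, 0 <= H i j) ->
  \sum_(b < K) \sum_(i < b.+1) H i (b - i)%N <= \sum_(i < K) \sum_(j < K) H i j.
Proof.
move=> hH.
rewrite (eq_bigr (fun b : 'I_K => \sum_(i < K) (if (i < b.+1)%N then H i (b - i)%N else 0)));
  last by move=> b _; rewrite (sum_if_lt (fun i => H i (b - i)%N)) // (ltn_ord b).
rewrite exchange_big; apply: ler_sum => i _.
have e : \sum_(0 <= b < K) (if (i < b.+1)%N then H i (b - i)%N else 0) =
         \sum_(0 <= j < K - i) H i j.
  rewrite (@big_cat_nat _ _ _ i) //=; last by apply: ltnW (ltn_ord i).
  rewrite big1_seq ?add0r; last first.
    by move=> b; rewrite mem_index_iota => /andP[_ hb]; rewrite ifF //; lia.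
  rewrite -{1}(add0n i) big_addn; apply: eq_big_nat => j hj.
  by rewrite ifT ?addnK //; lia.
rewrite !big_mkord in e.
by rewrite e; apply: sum_widen => //; exact: leq_subr.
Qed.

Definition rconv u v (be : mi) : R :=
  let: (b1, b2, b3) := be in
  \sum_(i < b1.+1) \sum_(j < b2.+1) \sum_(k < b3.+1)
     u (i : nat, j : nat, k : nat) * v ((b1 - i)%N, (b2 - j)%N, (b3 - k)%N).

Lemma sum_mul_sum K (A B : 'I_K -> R) :
  (\sum_(i < K) A i) * (\sum_(j < K) B j) = \sum_(i < K) \sum_(j < K) A i * B j.
Proof. by rewrite big_distrl; apply: eq_bigr => i _; rewrite big_distrr. Qed.

(* Box sums are submultiplicative under convolution: apply conv1_le_square in
   each of the three coordinates. *)
Lemma box_rconv K u v : (forall al, 0 <= u al) -> (forall al, 0 <= v al) ->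
  box_sum K (rconv u v) <= box_sum K u * box_sum K v.
Proof.
move=> hu hv.
pose W i i' := \sum_(b2 < K) \sum_(j < b2.+1) \sum_(b3 < K) \sum_(k < b3.+1)
    u (i, (j : nat), (k : nat)) * v (i', (b2 - j)%N, (b3 - k)%N).
have hW i i' : 0 <= W i i' by do 4 (apply: sumr_ge0 => ? _); exact: mulr_ge0.
have -> : box_sum K (rconv u v) = \sum_(b1 < K) \sum_(i < b1.+1) W i (b1 - i)%N.
  rewrite /box_sum; apply: eq_bigr => b1 _ /=.
  under eq_bigr => b2 _ do rewrite exchange_big.
  rewrite exchange_big; apply: eq_bigr => i _; apply: eq_bigr => b2 _.
  by rewrite exchange_big.
apply: le_trans (conv1_le_square K hW) _.
have -> : box_sum K u * box_sum K v = \sum_(i < K) \sum_(i' < K) \sum_(j < K) \sum_(j' < K)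
    \sum_(k < K) \sum_(k' < K) u (i : nat, j : nat, k : nat) * v (i' : nat, j' : nat, k' : nat).
  rewrite /box_sum sum_mul_sum; apply: eq_bigr => i _; apply: eq_bigr => i' _.
  rewrite sum_mul_sum; apply: eq_bigr => j _; apply: eq_bigr => j' _.
  by rewrite sum_mul_sum.
apply: ler_sum => i _; apply: ler_sum => i' _.
pose V j j' := \sum_(b3 < K) \sum_(k < b3.+1)
  u (i : nat, j, (k : nat)) * v (i' : nat, j', (b3 - k)%N).
have hV j j' : 0 <= V j j' by do 2 (apply: sumr_ge0 => ? _); exact: mulr_ge0.
apply: le_trans (conv1_le_square K hV) _; apply: ler_sum => j _; apply: ler_sum => j' _.
apply: (@conv1_le_square K (fun k k' => u (i : nat, j : nat, k) * v (i' : nat, j' : nat, k'))).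
by move=> k k'; exact: mulr_ge0.
Qed.

End DegreeAndBoxSums.

Section WeightedCoefficients.
Variable R : realType.
Implicit Types (s : R) (c p q : mi -> quat R).

Definition mi_deg (be : mi) : nat := let: (b1, b2, b3) := be in (b1 + b2 + b3)%N.

Definition weight s c (be : mi) : R := s ^+ mi_deg be * qnorm (c be).

Lemma weight_ge0 s c be : 0 <= s -> 0 <= weight s c be.
Proof. by move=> hs; rewrite /weight mulr_ge0 ?exprn_ge0 ?qnorm_ge0. Qed.

(* Weights of a CK-product are dominated by the real convolution of the
   weights: the norm is multiplicative and degrees add. *)
Lemma weight_ck_conv s p q be : 0 <= s ->
  weight s (ck_conv p q) be <= rconv (weight s p) (weight s q) be.
Proof.
move=> hs; case: be => [[b1 b2] b3]; rewrite /weight /ck_conv /rconv /=.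
apply: le_trans (ler_wpM2l (exprn_ge0 _ hs) (qnorm_sum _ _ _)) _.
rewrite mulr_sumr; apply: ler_sum => i _.
apply: le_trans (ler_wpM2l (exprn_ge0 _ hs) (qnorm_sum _ _ _)) _.
rewrite mulr_sumr; apply: ler_sum => j _.
apply: le_trans (ler_wpM2l (exprn_ge0 _ hs) (qnorm_sum _ _ _)) _.
rewrite mulr_sumr; apply: ler_sum => k _.
rewrite qnorm_mul mulrACA -exprD.
have -> : (i + j + k + (b1 - i + (b2 - j) + (b3 - k)))%N = (b1 + b2 + b3)%N.
  by have := ltn_ord i; have := ltn_ord j; have := ltn_ord k; lia.
by [].
Qed.

Lemma box_ck_pow0 s f K : 0 <= s -> box_sum K (weight s (ck_pow_coef f 0)) <= 1.
Proof.
move=> hs; case: K => [|K]; first by rewrite /box_sum big_ord0.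
have hzero be : be != mi0 -> weight s (ck_pow_coef f 0) be = 0.
  by move=> /negbTE hbe; rewrite /weight /= hbe qnorm0 mulr0.
rewrite /box_sum !big_ord_recl !big1 ?addr0; first by rewrite /weight /= qnorm_qone mulr1.
all: by move=> *; rewrite ?big1 // => *; rewrite ?big1 // => *; apply: hzero.
Qed.

Lemma box_ck_pow s f B n K : 0 <= s -> 0 <= B ->
  (forall K, box_sum K (weight s (coef_trunc f)) <= B) ->
  box_sum K (weight s (ck_pow_coef f n)) <= B ^+ n.
Proof.
move=> hs hB hf; elim: n => [|n ih]; first by rewrite expr0 box_ck_pow0.
have hw c be : 0 <= weight s c be by apply: weight_ge0.
apply: le_trans (_ : box_sum K (rconv (weight s (ck_pow_coef f n))
                                      (weight s (coef_trunc f))) <= _).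
  by rewrite /box_sum; do 3 (apply: ler_sum => ? _); apply: weight_ck_conv.
apply: le_trans (box_rconv _ (hw _) (hw _)) _.
by rewrite exprSr; apply: ler_pM => //; apply: box_sum_ge0.
Qed.

(* Shrinking the radius r0 by a factor q <= 1 shrinks the weighted norm of the
   coefficients of f (which have no constant term) by at least the factor q. *)
Lemma box_coef_trunc (f : mi -> quat R) (r0 q M : R) K :
  0 < r0 -> 0 < q -> q <= 1 ->
  (forall K, \sum_(1 <= k < K) sum_deg k (fun al : mi => r0 ^+ k * qnorm (f al)) <= M) ->
  box_sum K (weight (q * r0) (coef_trunc f)) <= q * M.
Proof.
move=> hr hq hq1 hM; have [hq0 hr0] := (ltW hq, ltW hr).
apply: le_trans (box_le_deg_sum _ (fun be => weight_ge0 _ be (mulr_ge0 hq0 hr0))) _.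
set g := weight (q * r0) (coef_trunc f).
have hg0 : sum_deg 0 g = 0 by rewrite /sum_deg !big_ord1 /g /weight /= qnorm0 mulr0.
rewrite /deg_sum -(big_mkord xpredT (fun k => sum_deg k g)).
case: (3 * K)%N => [|N]; first by rewrite big_geq // mulr_ge0 // (le_trans _ (hM 0%N)) ?big_geq.
rewrite big_ltn // hg0 add0r; apply: le_trans (ler_wpM2l hq0 (hM N.+1)).
rewrite mulr_sumr; apply: ler_sum_nat => k /andP[hk _].
have hqk : q ^+ k <= q.
  by case: k hk => // k _; rewrite exprS ler_piMr // exprn_ile1.
rewrite /sum_deg mulr_sumr; apply: ler_sum => a _.
rewrite mulr_sumr; apply: ler_sum => b _.
rewrite /g /weight /coef_trunc /=.
have -> : (a + b + (k - a - b))%N = k by have := ltn_ord a; have := ltn_ord b; lia.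
rewrite exprMn mulrA; apply: ler_pM; rewrite ?mulr_ge0 ?exprn_ge0 ?qnorm_ge0 //.
  by apply: ler_wpM2r; rewrite ?exprn_ge0.
by case: ifP => _; rewrite ?qnorm0 ?qnorm_ge0.
Qed.

Lemma fueter_series_cvg (x : quat R) c s (C : R) : 0 <= s ->
  qnorm (zeta1 x) <= s -> qnorm (zeta2 x) <= s -> qnorm (zeta3 x) <= s ->
  (forall K, box_sum K (weight s c) <= C) ->
  exists2 v, qseries_to (fun k => sum_deg k (fun be => qmul (zeta_pow x be) (c be))) v
           & qnorm v <= C.
Proof.
move=> hs h1 h2 h3 hC.
apply: (@qseries_abs_cvg _ _ (fun k => sum_deg k (weight s c))) => [k|K].
  apply: le_trans (qnorm_sum _ _ _) _; apply: ler_sum => a _.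
  apply: le_trans (qnorm_sum _ _ _) _; apply: ler_sum => b _.
  rewrite qnorm_mul /weight /=; apply: ler_wpM2r; first exact: qnorm_ge0.
  exact: zeta_pow_le.
apply: le_trans (hC K); apply: deg_sum_le_box => be; exact: weight_ge0.
Qed.

End WeightedCoefficients.

Lemma small_factor (R : realType) (M rho : R) : 0 <= M -> 0 < rho ->
  exists q : R, [/\ 0 < q, q <= 1 & q * M < rho].
Proof.
move=> hM hrho; have hD : 0 < M + rho by lra.
exists (rho / (M + rho)); split.
- exact: divr_gt0.
- by rewrite ler_pdivrMr // mul1r lerDr.
- by rewrite mulrAC ltr_pdivrMr // ltr_pM2l // ltrDl.
Qed.

Unset Implicit Arguments. Set Strict Implicit.

Theorem mainTheorem2 (R : realType) (f : mi -> quat R) (r0 : R) (hr0 : 0 < r0)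
  (hsum : exists M : R, forall K : nat,
     \sum_(1 <= k < K) sum_deg k (fun al : mi => r0 ^+ k * qnorm (f al)) <= M) :
  forall rho : R, 0 < rho ->
  exists eps : R, 0 < eps /\
    forall x : quat R,
      qc x 0 ^+ 2 + qc x 1 ^+ 2 < eps ->
      qc x 0 ^+ 2 + qc x 2 ^+ 2 < eps ->
      qc x 0 ^+ 2 + qc x 3 ^+ 2 < eps ->
      forall n : nat, (0 < n)%N ->
        exists v : quat R, ck_pow_at f n x v /\ qnorm v < rho ^+ n.
Proof.
move: hsum => [M hM] rho hrho.
have hM0 : 0 <= M by have := hM 0%N; rewrite big_geq.
have [q [hq hq1 hqM]] := small_factor hM0 hrho.
pose s := q * r0.
have hs : 0 <= s by rewrite mulr_ge0 ?ltW.
have hqM0 : 0 <= q * M by apply: mulr_ge0 (ltW hq) hM0.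
exists (s ^+ 2); split; first by rewrite exprn_gt0 ?mulr_gt0.
move=> x h1 h2 h3 n hn.
have [hz1 hz2 hz3] := qnorm_zeta_le hs h1 h2 h3.
have hbox K : box_sum K (weight s (ck_pow_coef f n)) <= (q * M) ^+ n.
  by apply: box_ck_pow => // K'; apply: box_coef_trunc.
have [v hv hvn] := fueter_series_cvg hs hz1 hz2 hz3 hbox.
exists v; split; first exact: hv.
by apply: le_lt_trans hvn _; rewrite ltrXn2r // ?ltW // -lt0n.
Qed.
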